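(* Let $m\ge 3$, $n=2m$, and let $D=(X,O)$ be a marginally coupled QS design with $n$ rows. Suppose $d_H(O)\ge m-2$ and the number of unordered pairs of distinct rows of $O$ at Hamming distance exactly $m-2$ is smaller than $m^2/2$. Then $$d_1(X)\le\left\lfloor\frac{(m+1)m}{3}\right\rfloor,\qquad d_2(X)\le\sqrt{\left\lfloor\frac{m^2(m+1)}{6}\right\rfloor}.$$
   Context: $X$ is a $2m\times m$ LHD (each column a permutation of $\{1,\ldots,2m\}$), $O$ is a $2m\times m$ sequence design (each row a permutation of $\{1,\ldots,m\}$). $D=(X,O)$ is marginally coupled if for every column $u$ of $O$, every component $c\in\{1,\ldots,m\}$ and every column $j$ of $X$, the multiset $\{\lfloor (X_{rj}-1)/m\rfloor: O_{ru}=c\}$ equals $\{0,1\}$. $d_q(X)=\min_{i<j}\{\sum_k|x_{ik}-x_{jk}|^q\}^{1/q}$; $d_H(O)$ is the minimum over distinct row pairs of the number of positions where the rows differ. *)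

From HB Require Import structures.
From mathcomp Require Import all_boot all_order all_algebra.
Set Implicit Arguments. Unset Strict Implicit. Unset Printing Implicit Defensive.
Import Order.TTheory GRing.Theory Num.Theory.

(* Designs are functions row -> column -> nat, entries taken 1-based as in the paper. *)
Definition design (nr nc : nat) := 'I_nr -> 'I_nc -> nat.

Definition is_LHD nr nc (X : design nr nc) : Prop :=
  forall j : 'I_nc, (forall i, 1 <= X i j <= nr) /\ injective (fun i => X i j).

Definition is_seq_design nr nc (O : design nr nc) : Prop :=
  forall i : 'I_nr, (forall j, 1 <= O i j <= nc) /\ injective (O i).

Definition marginally_coupled m (X O : design (2 * m) m) : Prop :=
  forall (u : 'I_m) (c : nat) (j : 'I_m), 1 <= c <= m ->
    perm_eq [seq (X r j).-1 %/ m | r <- enum 'I_(2 * m) & O r u == c] [:: 0; 1].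

(* Minimum of f over unordered pairs of distinct rows {i < j}; the idx is an
   upper bound of all terms, so it is the true minimum whenever nr >= 2. *)
Definition min_pairs nr (f : 'I_nr -> 'I_nr -> nat) : nat :=
  \big[minn/ \sum_(p : 'I_nr * 'I_nr) f p.1 p.2]_(p : 'I_nr * 'I_nr | p.1 < p.2) f p.1 p.2.

Definition dist1 nr nc (X : design nr nc) (i j : 'I_nr) : nat :=
  \sum_(k < nc) (absz (Posz (X i k) - Posz (X j k))%R).

Definition sqdist2 nr nc (X : design nr nc) (i j : 'I_nr) : nat :=
  \sum_(k < nc) ((absz (Posz (X i k) - Posz (X j k))%R)) ^ 2.

Definition d1 nr nc (X : design nr nc) : nat := min_pairs (dist1 X).

(* d_2(X) = min_{i<j} sqrt(sum_k |x_ik - x_jk|^2) = sqrt of the minimum (sqrt monotone). *)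
Definition d2 (R : rcfType) nr nc (X : design nr nc) : R :=
  Num.sqrt (min_pairs (fun i j => sqdist2 X i j))%:R.

Definition hamming nr nc (O : design nr nc) (i j : 'I_nr) : nat :=
  #|[set k : 'I_nc | O i k != O j k]|.

Definition dH nr nc (O : design nr nc) : nat := min_pairs (hamming O).

Definition num_pairs_at nr nc (O : design nr nc) (d : nat) : nat :=
  #|[set p : 'I_nr * 'I_nr | (p.1 < p.2) && (hamming O p.1 p.2 == d)]|.

From HB Require Import structures.
From mathcomp Require Import all_boot all_order all_algebra zify.
Import Order.TTheory GRing.Theory Num.Theory.
Set Implicit Arguments. Unset Strict Implicit. Unset Printing Implicit Defensive.

(* Split the levels of every column of X into the lower half {1..m} and the
   upper half {m+1..2m}. Marginal coupling says that the two rows carrying a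
   given symbol in a column of O lie in opposite halves of every column of X;
   hence every row shares exactly m symbols with the other rows, at most two
   with each of them since d_H(O) >= m - 2. A counting argument then shows that
   if two columns of X split the rows differently, every lower row of one
   column shares two symbols with at least m/2 other rows, giving at least
   m^2/2 pairs at Hamming distance m - 2. So all columns split the rows into
   the same two blocks of m rows. Averaging the distance over the 2m(m-1)
   ordered pairs of distinct rows in a common block, where each column runs
   through all pairs of levels within one half, gives the two bounds. *)

Lemma sum_boolE (T : finType) (P Q : pred T) :
  \sum_(s | P s) (Q s : nat) = #|[set s | P s && Q s]|.
Proof. by rewrite -sum1dep_card big_mkcondr /=; apply: eq_bigr => s _; case: (Q s). Qed.

Lemma count_enum_card (T : finType) (a : pred T) : count a (enum T) = #|[set x | a x]|.
Proof. by rewrite cardsE cardE -size_filter enumT /enum_mem. Qed.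

Lemma uniq_map_inj_in (T1 T2 : eqType) (f : T1 -> T2) (s : seq T1) :
  uniq (map f s) -> {in s &, injective f}.
Proof.
elim: s => //= a s IHs /andP[fa_s /IHs {}IHs] x y.
rewrite !inE => /orP[/eqP-> | xs] /orP[/eqP-> | ys] // fxy.
- by move: fa_s; rewrite fxy map_f.
- by move: fa_s; rewrite -fxy map_f.
- exact: IHs.
Qed.

Lemma card_swap_split (T : finType) (S : {set T * T}) (P : pred (T * T)) :
  (forall p, ((p.2, p.1) \in S) = (p \in S)) ->
  (forall p, p \in S -> P (p.2, p.1) = ~~ P p) ->
  #|S| = 2 * #|[set p in S | P p]|.
Proof.
move=> S_sym P_swap; have swapK : involutive (fun p : T * T => (p.2, p.1)) by case.
rewrite -(cardsID [set p | P p] S) mul2n -addnn; congr (_ + _).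
  by apply: eq_card => p; rewrite !inE andbC.
rewrite -(card_preimset _ (inv_inj swapK)); apply: eq_card => p; rewrite !inE S_sym.
by case pS: (p \in S); rewrite ?andbF ?andbT //= P_swap ?negbK.
Qed.

Lemma reindex_ord_inj n (x : 'I_n -> nat) (G : nat -> nat) :
  (forall r, x r < n) -> injective x -> \sum_(r < n) G (x r) = \sum_(i < n) G i.
Proof.
move=> x_lt x_inj; pose xo r := Ordinal (x_lt r).
have xo_inj : injective xo by move=> a b [] /x_inj.
by rewrite [RHS](reindex_inj xo_inj).
Qed.

Lemma sum_ord_double (G : nat -> nat) m :
  \sum_(i < 2 * m) G i = \sum_(i < m) (G i + G (m + i)).
Proof. by rewrite -(big_mkord xpredT) mul2n -addnn big_mkord big_split_ord big_split. Qed.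

Lemma sum_same_half (g : nat -> nat -> nat) m :
  (forall i j, g (m + i) (m + j) = g i j) ->
  \sum_(i < 2 * m) \sum_(j < 2 * m) (if (m <= i) == (m <= j) then g i j else 0)
  = 2 * \sum_(i < m) \sum_(j < m) g i j.
Proof.
move=> g_shift; pose G i j := if (m <= i) == (m <= j) then g i j else 0.
rewrite -/(\sum_(i < 2 * m) \sum_(j < 2 * m) G i j).
rewrite (sum_ord_double (fun i => \sum_(j < 2 * m) G i j)) [RHS]mul2n -[RHS]addnn.
rewrite -big_split; apply: eq_bigr => i _; rewrite !(sum_ord_double (G _)).
have lo (k : 'I_m) : (m <= k) = false by rewrite leqNgt ltn_ord.
by congr (_ + _); apply: eq_bigr => j _; rewrite /G !lo !leq_addr ?g_shift ?addn0.
Qed.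

Lemma sum_ord_neq m : \sum_(i < m) \sum_(j < m) ((i : nat) != j : nat) = m * (m - 1).
Proof.
rewrite -[in m * _](card_ord m) -sum_nat_const; apply: eq_bigr => i _.
by rewrite sum_boolE subn1 -(cardC1 i); apply: eq_card => j; rewrite !inE val_eqE eq_sym.
Qed.

Lemma sum_ord_succ m : 2 * \sum_(i < m) i.+1 = m * m.+1.
Proof. by elim: m => [|m IHm]; rewrite ?big_ord0 // big_ord_recr /= mulnDr IHm; nia. Qed.

Lemma sum_ord_succ_sqr m : 6 * \sum_(i < m) i.+1 ^ 2 = m * m.+1 * (2 * m + 1).
Proof. by elim: m => [|m IHm]; rewrite ?big_ord0 // big_ord_recr /= mulnDr IHm; nia. Qed.

Lemma distnSS i j : `|i.+1 - j.+1| = `|i - j|.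
Proof. by rewrite -(distnDr 1 i j) !addn1. Qed.

Lemma sum_dist_ordS (F : nat -> nat) m :
  \sum_(i < m.+1) \sum_(j < m.+1) F `|i - j|
  = F 0 + 2 * \sum_(i < m) F i.+1 + \sum_(i < m) \sum_(j < m) F `|i - j|.
Proof.
rewrite big_ord_recl (big_ord_recl m (fun j : 'I_m.+1 => F `|0 - j|)) mul2n -addnn -!addnA.
congr (_ + (_ + _)); first by apply: eq_bigr => i _; rewrite dist0n.
rewrite -big_split; apply: eq_bigr => i _; rewrite big_ord_recl distn0.
by congr (_ + _); apply: eq_bigr => j _; rewrite distnSS.
Qed.

Lemma sum_ord_dist m : 3 * \sum_(i < m) \sum_(j < m) `|i - j| = m.+1 * m * (m - 1).
Proof.
elim: m => [|m IHm]; first by rewrite big_ord0.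
rewrite (sum_dist_ordS (fun d => d)) !mulnDr IHm; have := sum_ord_succ m.
by move: (\sum_(i < m) i.+1) => s; case: m {IHm} => [|m]; nia.
Qed.

Lemma sum_ord_sqr_dist m :
  6 * \sum_(i < m) \sum_(j < m) `|i - j| ^ 2 = m ^ 2 * (m ^ 2 - 1).
Proof.
elim: m => [|m IHm]; first by rewrite big_ord0.
rewrite (sum_dist_ordS (fun d => d ^ 2)) !mulnDr IHm; have := sum_ord_succ_sqr m.
by move: (\sum_(i < m) i.+1 ^ 2) => s; case: m {IHm} => [|m]; nia.
Qed.

Lemma min_pairs_le nr (f : 'I_nr -> 'I_nr -> nat) r s :
  (forall a b, f a b = f b a) -> r != s -> min_pairs f <= f r s.
Proof.
move=> f_sym rs.
have min_le (p : 'I_nr * 'I_nr) : p.1 < p.2 -> min_pairs f <= f p.1 p.2.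
  move=> lt_p; rewrite /min_pairs -minEnat.
  exact: (bigmin_le_cond _ (fun q : 'I_nr * 'I_nr => f q.1 q.2) lt_p).
case: (ltngtP r s) => [lt_rs | lt_sr | eq_rs]; first exact: (min_le (r, s)).
  by rewrite f_sym; exact: (min_le (s, r)).
by move: rs; rewrite (val_inj eq_rs) eqxx.
Qed.

Lemma min_pairs_mean nr (f : 'I_nr -> 'I_nr -> nat) (E : rel 'I_nr) :
  (forall r s, f r s = f s r) ->
  min_pairs f * \sum_r \sum_s (if E r s then (r != s : nat) else 0)
  <= \sum_r \sum_s (if E r s then f r s else 0).
Proof.
move=> f_sym; rewrite big_distrr; apply: leq_sum => r _.
rewrite big_distrr; apply: leq_sum => s _; case: (E r s) => //=; last by rewrite muln0.
by case: eqVneq => [->|rs]; rewrite ?muln0 // muln1 min_pairs_le.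
Qed.

Definition agreement nr nc (O : design nr nc) (r s : 'I_nr) : nat :=
  #|[set u | O r u == O s u]|.

Lemma agreement_sym nr nc (O : design nr nc) r s : agreement O r s = agreement O s r.
Proof. by apply: eq_card => u; rewrite !inE eq_sym. Qed.

Lemma agreement_le nr nc (O : design nr nc) r s : agreement O r s <= nc.
Proof. by rewrite -[X in _ <= X]card_ord max_card. Qed.

Lemma hamming_agreement nr nc (O : design nr nc) r s :
  hamming O r s = nc - agreement O r s.
Proof.
rewrite /hamming /agreement.
have -> : [set u | O r u != O s u] = ~: [set u | O r u == O s u].
  by apply/setP => u; rewrite !inE.
by rewrite -[X in X - _](card_ord nc) -(cardsC [set u | O r u == O s u]) addKn.
Qed.

Lemma agreement_le_dH nr nc (O : design nr nc) d r s :
  nc - d <= dH O -> r != s -> agreement O r s <= d.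
Proof.
move=> dH_ge rs.
have ham_sym a b : hamming O a b = hamming O b a.
  by rewrite !hamming_agreement agreement_sym.
have := min_pairs_le ham_sym rs.
by rewrite -/(dH O) hamming_agreement; have := agreement_le O r s; lia.
Qed.

Lemma card_agreement_pairs nr nc (O : design nr nc) d : d <= nc ->
  #|[set p : 'I_nr * 'I_nr | (p.1 != p.2) && (agreement O p.1 p.2 == d)]|
  = 2 * num_pairs_at O (nc - d).
Proof.
move=> d_le; rewrite (card_swap_split (P := fun p : 'I_nr * 'I_nr => p.1 < p.2)).
- congr (2 * _); apply: eq_card => -[r s]; rewrite !inE /= hamming_agreement.
  case: (ltngtP r s) => [lt_rs||]; rewrite ?andbF //.
  rewrite andbT -val_eqE neq_ltn lt_rs /=; have := agreement_le O r s.
  by move=> a_le; apply/idP/idP => /eqP E; apply/eqP; lia.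
- by move=> -[r s]; rewrite !inE /= eq_sym agreement_sym.
- move=> -[r s]; rewrite !inE /= => /andP[rs _].
  by rewrite -leqNgt ltn_neqAle eq_sym val_eqE rs.
Qed.

(* [agree] stands for the number of symbols shared by two rows of O, and [h],
   [h'] for the half-labellings of the rows by two columns of X. *)
Section LabelRigidity.

Variables (T : finType) (m : nat) (agree : T -> T -> nat) (h h' : T -> bool).

Hypothesis agree_sym : forall r s, agree r s = agree s r.
Hypothesis agree_le2 : forall r s, r != s -> agree r s <= 2.
Hypothesis sum_agree : forall r, \sum_(s | s != r) agree r s = m.
Hypothesis agree_flip :
  forall r s, r != s -> 0 < agree r s -> (h s != h r) && (h' s != h' r).
Hypothesis card_h : #|[set r | h r]| = m.
Hypothesis card_hN : #|[set r | ~~ h r]| = m.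
Hypothesis few_double_pairs :
  #|[set p : T * T | (p.1 != p.2) && (agree p.1 p.2 == 2)]| < m ^ 2.

Let nbhd r := [set s | (s != r) && (0 < agree r s)].
Let dbl r := [set s | (s != r) && (agree r s == 2)].
Let same r := h r == h' r.
Let upper_with b := #|[set s | h s && (same s == b)]|.

Lemma card_nbhd_dbl r : m <= #|nbhd r| + #|dbl r|.
Proof.
rewrite -(sum_agree r) -!sum_boolE -big_split /=; apply: leq_sum => s sr.
have := agree_le2 (r := r) (s := s); rewrite eq_sym sr => /(_ isT).
by case: (agree r s) => [|[|[|]]].
Qed.

Lemma dbl_sub_nbhd r : dbl r \subset nbhd r.
Proof. by apply/subsetP => s; rewrite !inE => /andP[-> /eqP ->]. Qed.

Lemma nbhd_flip r s : s \in nbhd r -> (h s != h r) && (same s == same r).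
Proof.
rewrite inE => /andP[sr /(agree_flip (r := r) (s := s))]; rewrite eq_sym sr.
by rewrite /same; case: (h s) (h r) (h' s) (h' r) => [] [] [] [] /(_ isT).
Qed.

Lemma upper_with_sum : upper_with true + upper_with false = m.
Proof.
rewrite -card_h -(cardsID [set s | same s] [set s | h s]) /upper_with.
by congr (_ + _); apply: eq_card => s; rewrite !inE; case: (same s); rewrite ?andbT ?andbF.
Qed.

Lemma card_nbhd_lower r : ~~ h r -> #|nbhd r| <= upper_with (same r).
Proof.
move=> hr; apply/subset_leq_card/subsetP => s /nbhd_flip /andP[hs same_s].
by rewrite inE same_s andbT; move: hs; rewrite (negbTE hr); case: (h s).
Qed.

Lemma same_lower_witness r : exists2 r', ~~ h r' & same r' = same r.
Proof.
case hr: (h r); last by exists r; rewrite ?hr.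
have m_gt0 : 0 < m by rewrite -card_h; apply/card_gt0P; exists r; rewrite inE.
have : 0 < #|nbhd r|.
  by have := card_nbhd_dbl r; have := subset_leq_card (dbl_sub_nbhd r); lia.
case/card_gt0P => s /nbhd_flip /andP[hs /eqP same_s]; exists s => //.
by move: hs; rewrite hr; case: (h s).
Qed.

Lemma card_dbl_large : (exists r s, same r != same s) ->
  forall r, ~~ h r -> m <= 2 * #|dbl r|.
Proof.
(* A lower row r' has at most upper_with (same r') neighbours; once both values
   of [same] occur, each upper_with b is m/2, forcing m/2 double neighbours. *)
case=> r0 [s0 same_r0s0].
have upper_with_large b : m <= 2 * upper_with b.
  have [r' hr' same_r'] : exists2 r', ~~ h r' & same r' = b.
    have : b = same r0 \/ b = same s0.
      by move: same_r0s0; case: b (same r0) (same s0) => [] [] []; auto.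
    by case=> ->; apply: same_lower_witness.
  have := card_nbhd_dbl r'; have := subset_leq_card (dbl_sub_nbhd r').
  by have := card_nbhd_lower hr'; rewrite same_r'; lia.
move=> r hr; have := card_nbhd_dbl r; have := card_nbhd_lower hr.
have := upper_with_large true; have := upper_with_large false.
by have := upper_with_sum; case: (same r); lia.
Qed.

Lemma card_double_pairs :
  #|[set p : T * T | (p.1 != p.2) && (agree p.1 p.2 == 2)]|
  = 2 * #|[set p : T * T | ~~ h p.1 & p.2 \in dbl p.1]|.
Proof.
rewrite (card_swap_split (P := fun p : T * T => ~~ h p.1)).
- by congr (2 * _); apply: eq_card => -[r s]; rewrite !inE /= eq_sym andbC.
- by move=> -[r s]; rewrite !inE /= eq_sym agree_sym.
move=> -[r s]; rewrite inE /= => /andP[rs /eqP a2].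
have agree_pos : 0 < agree r s by rewrite a2.
have /andP[hsr _] := agree_flip rs agree_pos.
by rewrite /= negbK; move: hsr; case: (h r) (h s) => [] [].
Qed.

Lemma same_const r s : same r = same s.
Proof.
case: (eqVneq (same r) (same s)) => // diff; exfalso.
have dbl_large := card_dbl_large (ex_intro _ r (ex_intro _ s diff)).
have : m * m <= 2 * #|[set p : T * T | ~~ h p.1 & p.2 \in dbl p.1]|.
  rewrite -sum1dep_card -(pair_big_dep (fun r => ~~ h r) (fun r s => s \in dbl r) (fun _ _ => 1)).
  rewrite big_distrr /= -{1}card_hN -sum_nat_cond_const; apply: leq_sum => r' hr'.
  by rewrite sum1_card; exact: dbl_large.
by have := few_double_pairs; rewrite card_double_pairs; lia.
Qed.

Lemma eq_labels_of_agreement r s : (h' r == h' s) = (h r == h s).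
Proof.
have := same_const r s; rewrite /same.
by case: (h r) (h s) (h' r) (h' s) => [] [] [] [].
Qed.

End LabelRigidity.

Definition level nr nc (X : design nr nc) (k : 'I_nc) (r : 'I_nr) : nat := (X r k).-1.

Definition upper_half m (X : design (2 * m) m) (k : 'I_m) (r : 'I_(2 * m)) : bool :=
  m <= level X k r.

Section LatinHypercube.

Variables (nr nc : nat) (X : design nr nc).
Hypothesis X_lhd : is_LHD X.

Lemma level_lt k r : level X k r < nr.
Proof. by have [/(_ r) /andP[X_ge1 X_le] _] := X_lhd k; rewrite /level; lia. Qed.

Lemma level_inj k : injective (level X k).
Proof.
move=> r s; have [X_range X_inj] := X_lhd k; apply: contra_eq => rs.
have := X_range r; have := X_range s; have := contra_neq (@X_inj r s) rs.
by rewrite /level /=; lia.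
Qed.

Lemma distn_level k r s : `|X r k - X s k| = `|level X k r - level X k s|.
Proof.
have [X_range _] := X_lhd k; have := X_range r; have := X_range s.
by rewrite /level; lia.
Qed.

Lemma sum_level k (G : nat -> nat) : \sum_r G (level X k r) = \sum_(i < nr) G i.
Proof. exact: reindex_ord_inj (@level_lt k) (@level_inj k). Qed.

Lemma sum2_level k (G : nat -> nat -> nat) :
  \sum_r \sum_s G (level X k r) (level X k s) = \sum_(i < nr) \sum_(j < nr) G i j.
Proof.
rewrite -(sum_level k (fun i => \sum_(j < nr) G i j)).
by apply: eq_bigr => r _; rewrite (sum_level k (G _)).
Qed.

End LatinHypercube.

Lemma divn_lt_double x m : x < 2 * m -> x %/ m = (m <= x).
Proof.
case: (leqP m x) => [m_le x_lt | x_lt _]; last by rewrite divn_small.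
have m_gt0 : 0 < m by lia.
by rewrite -(subnKC m_le) divnDl ?dvdnn // divnn m_gt0 divn_small ?leq_addr //; lia.
Qed.

Section MarginalCoupling.

Variables (m : nat) (X O : design (2 * m) m).
Hypotheses (X_lhd : is_LHD X) (O_seq : is_seq_design O) (XO_mc : marginally_coupled X O).

Lemma card_symbol u c : 1 <= c <= m -> #|[set r | O r u == c]| = 2.
Proof.
move=> c_range; have := perm_size (XO_mc u u c_range).
by rewrite size_map size_filter count_enum_card.
Qed.

Lemma upper_half_neq j u r s :
  r != s -> O r u = O s u -> upper_half X j r != upper_half X j s.
Proof.
move=> rs Ors; have [O_range _] := O_seq r.
have uniq_halves := perm_uniq (XO_mc u j (O_range u)); rewrite /= in uniq_halves.
have mem_symbol t : O t u = O r u -> t \in [seq t <- enum 'I_(2 * m) | O t u == O r u].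
  by move=> Otr; rewrite mem_filter Otr eqxx mem_enum.
apply: contra_neq rs => half_eq.
apply: (uniq_map_inj_in uniq_halves); rewrite ?mem_symbol //.
rewrite !(divn_lt_double (level_lt X_lhd j _)).
by move: half_eq; rewrite /upper_half => ->.
Qed.

Lemma sum_agreement r : \sum_(s | s != r) agreement O r s = m.
Proof.
have agreementE s : agreement O r s = \sum_u (O r u == O s u : nat).
  by rewrite sum_boolE; apply: eq_card => u; rewrite !inE.
under eq_bigr do rewrite agreementE.
rewrite exchange_big /= -[RHS]card_ord -sum1_card; apply: eq_bigr => u _.
have [O_range _] := O_seq r; have := card_symbol u (O_range u).
rewrite (cardsD1 r) inE eqxx sum_boolE => /eqP; rewrite eqSS => /eqP card_others.
by rewrite -[RHS]card_others; apply: eq_card => s; rewrite !inE [O r u == _]eq_sym.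
Qed.

Lemma card_upper_half k : #|[set r | upper_half X k r]| = m.
Proof.
transitivity (\sum_r (upper_half X k r : nat)).
  by rewrite sum_boolE; apply: eq_card => r; rewrite !inE.
rewrite (sum_level X_lhd k (fun i => (m <= i : nat))) (sum_ord_double (fun i => (m <= i : nat))).
under eq_bigr => i _ do rewrite leqNgt ltn_ord leq_addr.
by rewrite sum_nat_const card_ord muln1.
Qed.

Lemma card_lower_half k : #|[set r | ~~ upper_half X k r]| = m.
Proof.
have := cardsC [set r | upper_half X k r]; rewrite card_upper_half card_ord.
have -> : ~: [set r | upper_half X k r] = [set r | ~~ upper_half X k r].
  by apply/setP => r; rewrite !inE.
lia.
Qed.

Lemma halves_coincide :
  (forall r s, r != s -> agreement O r s <= 2) ->
  #|[set p : 'I_(2 * m) * 'I_(2 * m) | (p.1 != p.2) && (agreement O p.1 p.2 == 2)]| < m ^ 2 ->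
  forall j k r s,
  (upper_half X k r == upper_half X k s) = (upper_half X j r == upper_half X j s).
Proof.
move=> agree_le2 few_doubles j k r s.
apply: (eq_labels_of_agreement (agreement_sym O) agree_le2 sum_agreement _
          (card_upper_half j) (card_lower_half j) few_doubles).
move=> r' s' rs /card_gt0P [u]; rewrite inE => /eqP Ou.
by apply/andP; split; rewrite eq_sym; apply: upper_half_neq rs Ou.
Qed.

End MarginalCoupling.

Section SharedHalves.

Variables (m : nat) (X : design (2 * m) m) (j0 : 'I_m).
Hypothesis X_lhd : is_LHD X.
Hypothesis shared_halves : forall k r s,
  (upper_half X k r == upper_half X k s) = (upper_half X j0 r == upper_half X j0 s).

Lemma card_same_half_pairs :
  \sum_r \sum_s (if upper_half X j0 r == upper_half X j0 s then (r != s : nat) else 0)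
  = 2 * (m * (m - 1)).
Proof.
rewrite -sum_ord_neq -(@sum_same_half (fun i j => (i != j : nat)) m); last first.
  by move=> i j; rewrite eqn_add2l.
rewrite -(sum2_level X_lhd j0 (fun i j => if (m <= i) == (m <= j) then (i != j : nat) else 0)).
by apply: eq_bigr => r _; apply: eq_bigr => s _; rewrite (inj_eq (level_inj X_lhd (k := j0))).
Qed.

Lemma sum_same_half_pairs (G : nat -> nat) :
  \sum_r \sum_s (if upper_half X j0 r == upper_half X j0 s
                 then \sum_k G `|X r k - X s k| else 0)
  = m * (2 * \sum_(i < m) \sum_(j < m) G `|i - j|).
Proof.
transitivity (\sum_r \sum_s \sum_k
  (if upper_half X k r == upper_half X k s then G `|X r k - X s k| else 0)).
  apply: eq_bigr => r _; apply: eq_bigr => s _.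
  under [RHS]eq_bigr do rewrite shared_halves.
  by case: (_ == _); rewrite // big1.
under eq_bigr do rewrite exchange_big; rewrite exchange_big /=.
have -> : m * (2 * \sum_(i < m) \sum_(j < m) G `|i - j|)
  = \sum_(k < m) 2 * \sum_(i < m) \sum_(j < m) G `|i - j| by rewrite sum_nat_const card_ord.
apply: eq_bigr => k _.
rewrite -(@sum_same_half (fun i j => G `|i - j|) m); last by move=> i j; rewrite distnDl.
rewrite -(sum2_level X_lhd k (fun i j => if (m <= i) == (m <= j) then G `|i - j| else 0)).
by apply: eq_bigr => r _; apply: eq_bigr => s _; rewrite /upper_half distn_level.
Qed.

Lemma min_pairs_dist_le (G : nat -> nat) :
  min_pairs (fun r s => \sum_k G `|X r k - X s k|) * (m - 1)
  <= \sum_(i < m) \sum_(j < m) G `|i - j|.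
Proof.
have f_sym r s : \sum_k G `|X r k - X s k| = \sum_k G `|X s k - X r k|.
  by apply: eq_bigr => k _; rewrite distnC.
have := min_pairs_mean (fun r s => upper_half X j0 r == upper_half X j0 s) f_sym.
rewrite card_same_half_pairs sum_same_half_pairs.
have m_gt0 : 0 < m := leq_ltn_trans (leq0n j0) (ltn_ord j0).
by move: (min_pairs _) (\sum_(i < m) _) => d S; nia.
Qed.

End SharedHalves.

Local Open Scope ring_scope.

Theorem lemma5 (R : rcfType) (m : nat) (X O : design (2 * m) m) :
  (3 <= m)%N ->
  is_LHD X -> is_seq_design O -> marginally_coupled X O ->
  (m - 2 <= dH O)%N ->
  ((num_pairs_at O (m - 2))%:R < (m ^ 2)%:R / 2 :> R) ->
  (d1 X <= (m + 1) * m %/ 3)%N /\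
  d2 R X <= Num.sqrt ((m ^ 2 * (m + 1)) %/ 6)%:R.
Proof.
move=> m_ge3 X_lhd O_seq XO_mc dH_ge few_pairs.
have m_gt0 : (0 < m)%N by lia.
have few_doubles :
    (#|[set p : 'I_(2 * m) * 'I_(2 * m) | (p.1 != p.2) && (agreement O p.1 p.2 == 2%N)]| < m ^ 2)%N.
  rewrite card_agreement_pairs; last by lia.
  by rewrite mulnC -(ltr_nat R) natrM -ltr_pdivlMr ?ltr0n.
have shared := halves_coincide X_lhd O_seq XO_mc (fun r s => agreement_le_dH dH_ge) few_doubles
                 (Ordinal m_gt0).
split.
- have d1_le : (d1 X * (m - 1) <= \sum_(i < m) \sum_(j < m) `|i - j|)%N :=
    min_pairs_dist_le X_lhd shared (fun d => d).
  by rewrite leq_divRL //; have := sum_ord_dist m; nia.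
- have d2_le : (min_pairs (fun r s => sqdist2 X r s) * (m - 1)
                 <= \sum_(i < m) \sum_(j < m) `|i - j| ^ 2)%N :=
    min_pairs_dist_le X_lhd shared (fun d => (d ^ 2)%N).
  rewrite /d2 ler_sqrt ?ler0n // ler_nat leq_divRL //.
  by have := sum_ord_sqr_dist m; nia.
Qed.
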